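(* Let $\mathfrak A\subseteq\mathfrak G_\bullet$ be a log-free subgrid. Then there is a hereditary log-free subgrid $\mathfrak B$ with $\mathfrak B\supseteq\mathfrak A$ such that the height of $\mathfrak B$ equals the height of $\mathfrak A$.
   Context: Log-free transmonomials: $\mathfrak G_0=\{x^b:b\in\mathbb R\}$, and for $N\ge1$, $\mathfrak G_N=\{x^be^L: b\in\mathbb R,\ L \text{ a purely large transseries with } \operatorname{supp}L\subseteq\mathfrak G_{N-1}\}$; $\mathfrak G_\bullet=\bigcup_N\mathfrak G_N$, with the usual ordering of transmonomials. A ratio set is a finite set of monomials $\prec1$; a grid is a set $\mathfrak J^{\boldsymbol\mu,\mathbf m}=\{\boldsymbol\mu^{\mathbf k}:\mathbf k\in\mathbb Z^n,\mathbf k\ge\mathbf m\}$ for a ratio set $\boldsymbol\mu=\{\mu_1,\dots,\mu_n\}$, and a subgrid is a subset of a grid. The height of a log-free subgrid is the least $N$ with $\mathfrak A\subseteq\mathfrak G_N$. A log-free subgrid $\mathfrak B$ is hereditary if for every $x^be^L\in\mathfrak B$ ($b\in\mathbb R$, $L$ purely large log-free) we have $\operatorname{supp}L\subseteq\mathfrak B$. *)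

From Stdlib Require Import Reals ZArith List ClassicalEpsilon.
Open Scope R_scope.

(** A "level" packages a carrier of pre-monomials together with a validity
  predicate (which pre-monomials are genuine log-free transmonomials of the
  level), the group structure (1, product, inverse) and the strict ordering
  [lt m n] meaning m ≺ n.

  Level 0: carrier R, the real b standing for x^b; x^a ≺ x^b iff a < b.
  Level N+1: carrier R * (car(level N) -> R); the pair (b, L) stands for
  x^b e^L, where L is a formal series over the level-N monomials (its
  coefficient function).  (b,L) is valid iff L is a purely large grid-based
  (log-free) transseries with support in G_N. *)

Record lvl := Lvl {
  car : Type;
  valid : car -> Prop;
  one : car;
  mul : car -> car -> car;
  inv : car -> car;
  lt : car -> car -> Prop
}.

Definition zpow (P : lvl) (u : car P) (k : Z) : car P :=
  match k with
  | Z0 => one P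
  | Zpos p => Nat.iter (Pos.to_nat p) (mul P u) (one P)
  | Zneg p => Nat.iter (Pos.to_nat p) (mul P (inv P u)) (one P)
  end.

Definition monpow (P : lvl) (mu : list (car P)) (k : list Z) : car P :=
  fold_right (fun uj acc => mul P (zpow P (fst uj) (snd uj)) acc) (one P)
    (combine mu k).

Definition ratio_set (P : lvl) (mu : list (car P)) : Prop :=
  Forall (fun u => valid P u /\ lt P u (one P)) mu.

Definition grid (P : lvl) (mu : list (car P)) (lo : list Z) : car P -> Prop :=
  fun y => exists k : list Z,
      length k = length mu /\ Forall2 Z.le lo k /\ y = monpow P mu k.

Definition subgrid (P : lvl) (S : car P -> Prop) : Prop :=
  exists (mu : list (car P)) (lo : list Z),
    ratio_set P mu /\ length lo = length mu /\
    (forall y, S y -> grid P mu lo y).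

Definition supp {T : Type} (f : T -> R) : T -> Prop := fun m => f m <> 0.

Definition purely_large (P : lvl) (L : car P -> R) : Prop :=
  subgrid P (supp L) /\
  (forall m, supp L m -> valid P m /\ lt P (one P) m).

Definition leadpos (P : lvl) (f : car P -> R) : Prop :=
  exists m, 0 < f m /\ (forall m', f m' <> 0 -> m' <> m -> lt P m' m).

Definition base_lvl : lvl :=
  Lvl R (fun _ => True) 0 Rplus Ropp Rlt.

Definition mulS (P : lvl) (x y : R * (car P -> R)) : R * (car P -> R) :=
  (fst x + fst y, fun m => snd x m + snd y m).
Definition invS (P : lvl) (x : R * (car P -> R)) : R * (car P -> R) :=
  (- fst x, fun m => - snd x m).

(** x^c e^N ≺ 1 iff N < 0, or N = 0 and c < 0. *)
Definition smallS (P : lvl) (x : R * (car P -> R)) : Prop :=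
  leadpos P (fun m => - snd x m) \/ (snd x = (fun _ => 0) /\ fst x < 0).

Definition succ_lvl (P : lvl) : lvl :=
  Lvl (R * (car P -> R))
      (fun x => purely_large P (snd x))
      (0, fun _ => 0)
      (mulS P) (invS P)
      (fun x y => smallS P (mulS P x (invS P y))).

(** level N : pre-monomials of height <= N, valid ones form G_N. *)
Fixpoint level (n : nat) : lvl :=
  match n with
  | O => base_lvl
  | S n' => succ_lvl (level n')
  end.

Definition push {A B : Type} (e : A -> B) (f : A -> R) : B -> R :=
  fun y => match excluded_middle_informative (exists x, e x = y) with
           | left h => f (proj1_sig (constructive_indefinite_description _ h))
           | right _ => 0
           end.

Fixpoint emb (n : nat) : car (level n) -> car (level (S n)) :=
  match n as n0 return car (level n0) -> car (level (S n0)) with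
  | O => fun b => (b, fun _ => 0)
  | S n' => fun x => (fst x, push (emb n') (snd x))
  end.

Fixpoint emb_up (n d : nat) : car (level n) -> car (level (d + n)) :=
  match d as d0 return car (level n) -> car (level (d0 + n)) with
  | O => fun x => x
  | S d' => fun x => emb (d' + n) (emb_up n d' x)
  end.

Fixpoint inG (N k : nat) {struct N} : car (level N) -> Prop :=
  match N as N0 return car (level N0) -> Prop with
  | O => fun m => valid (level O) m
  | S N' => fun m => valid (level (S N')) m /\
      ((k < S N')%nat -> exists m0, emb N' m0 = m /\ inG N' k m0)
  end.

Definition logfree_subgrid (N : nat) (A : car (level N) -> Prop) : Prop :=
  (forall m, A m -> valid (level N) m) /\ subgrid (level N) A.

Definition is_height (N : nat) (A : car (level N) -> Prop) (h : nat) : Prop :=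
  (forall m, A m -> inG N h m) /\
  (forall k, (forall m, A m -> inG N k m) -> (h <= k)%nat).

Definition hereditary (N : nat) : (car (level N) -> Prop) -> Prop :=
  match N as N0 return (car (level N0) -> Prop) -> Prop with
  | O => fun _ => True
  | S n => fun B => forall (x : car (level (S n))), B x ->
             forall m, snd x m <> 0 -> B (emb n m)
  end.

From Stdlib Require Import Reals ZArith List ClassicalEpsilon Classical
  FunctionalExtensionality Wf_nat Lra Lia.
Open Scope R_scope.

(* If A is a subgrid of level n+1 with ratios
   mu_1, ..., mu_r, then every x^b e^L in A is a product of powers of the
   mu_i, so supp L lies in the union of the supports of the exponents of the
   mu_i: a finite union of subgrids, hence a log-free subgrid S of level n.
   Close S recursively into a hereditary D and take B = A ∪ D.  Since the
   support of a monomial of G_k lies in G_(k-1), closing adds nothing above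
   the height of A, so B has the same height. *)

Lemma push_inj {A B : Type} (e : A -> B) (f : A -> R) (x : A) :
  (forall a b, e a = e b -> a = b) -> push e f (e x) = f x.
Proof.
  intros e_inj. unfold push. destruct excluded_middle_informative as [h|h].
  - destruct constructive_indefinite_description as [x' Ex']. simpl.
    now rewrite (e_inj _ _ Ex').
  - exfalso. apply h. now exists x.
Qed.

Lemma push_neq0 {A B : Type} (e : A -> B) (f : A -> R) (y : B) :
  push e f y <> 0 -> exists x, e x = y /\ f x <> 0.
Proof.
  unfold push. destruct excluded_middle_informative as [h|h].
  - destruct constructive_indefinite_description as [x Ex]. simpl. now exists x.
  - now intros [].
Qed.

Lemma push_add {A B : Type} (e : A -> B) (f g : A -> R) (y : B) :
  push e (fun a => f a + g a) y = push e f y + push e g y.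
Proof. unfold push. destruct excluded_middle_informative; [reflexivity | ring]. Qed.

Lemma push_opp {A B : Type} (e : A -> B) (f : A -> R) (y : B) :
  push e (fun a => - f a) y = - push e f y.
Proof. unfold push. destruct excluded_middle_informative; [reflexivity | ring]. Qed.

Lemma push_zero {A B : Type} (e : A -> B) (y : B) : push e (fun _ => 0) y = 0.
Proof. unfold push. destruct excluded_middle_informative; reflexivity. Qed.

Lemma level_mul1l n x : mul (level n) (one (level n)) x = x.
Proof.
  destruct n as [|n]; simpl; [ring|].
  destruct x as [b L]. unfold mulS. simpl. f_equal; [ring|].
  apply functional_extensionality; intro; ring.
Qed.

Lemma monpow_cons P u mu j k :
  monpow P (u :: mu) (j :: k) = mul P (zpow P u j) (monpow P mu k).
Proof. reflexivity. Qed.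

Lemma emb_one n : emb n (one (level n)) = one (level (S n)).
Proof.
  destruct n; simpl; [reflexivity|].
  f_equal. apply functional_extensionality; intro; apply push_zero.
Qed.

Lemma emb_mul n x y :
  emb n (mul (level n) x y) = mul (level (S n)) (emb n x) (emb n y).
Proof.
  destruct n; simpl; unfold mulS; simpl; f_equal;
    apply functional_extensionality; intro; [ring | apply push_add].
Qed.

Lemma emb_inv n x : emb n (inv (level n) x) = inv (level (S n)) (emb n x).
Proof.
  destruct n; simpl; unfold invS; simpl; f_equal;
    apply functional_extensionality; intro; [ring | apply push_opp].
Qed.

Lemma emb_inj n x y : emb n x = emb n y -> x = y.
Proof.
  revert x y; induction n as [|n IH]; simpl; intros x y E.
  - now injection E.
  - destruct x as [a f], y as [b g]. simpl in E. injection E as <- Efg.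
    f_equal. apply functional_extensionality; intro m.
    rewrite <- (push_inj (emb n) f m IH), <- (push_inj (emb n) g m IH).
    exact (f_equal (fun h => h (emb n m)) Efg).
Qed.

Lemma emb_zpow n u j : emb n (zpow (level n) u j) = zpow (level (S n)) (emb n u) j.
Proof.
  destruct j as [|p|p]; simpl; [apply emb_one| |];
    induction (Pos.to_nat p) as [|i IH]; simpl; try apply emb_one;
    now rewrite emb_mul, IH, ?emb_inv.
Qed.

Lemma emb_monpow n mu k :
  emb n (monpow (level n) mu k) = monpow (level (S n)) (map (emb n) mu) k.
Proof.
  revert k; induction mu as [|u mu IH]; intros [|j k]; try apply emb_one.
  simpl map. now rewrite !monpow_cons, emb_mul, emb_zpow, IH.
Qed.

Lemma smallS_emb n
  (emb_lt_n : forall x y, lt (level n) x y -> lt (level (S n)) (emb n x) (emb n y))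
  (z : car (level (S n))) :
  smallS (level n) z -> smallS (level (S n)) (emb (S n) z).
Proof.
  destruct z as [a f]. change (emb (S n) (a, f)) with (a, push (emb n) f).
  unfold smallS; simpl. intros [[m [fm_neg lead_m]] | [-> a_neg]].
  - left. exists (emb n m). split.
    + now rewrite push_inj by apply emb_inj.
    + intros m' Hm' m'_neq.
      destruct (push_neq0 (emb n) f m') as [x [<- fx]];
        [intros E; apply Hm', Ropp_eq_0_compat, E|].
      apply emb_lt_n, lead_m; [lra|]. intros ->. now apply m'_neq.
  - right. split; [|exact a_neg].
    apply functional_extensionality; intro; apply push_zero.
Qed.

Lemma emb_lt n x y : lt (level n) x y -> lt (level (S n)) (emb n x) (emb n y).
Proof.
  revert x y; induction n as [|n IH]; intros x y Hxy.
  - right. simpl. split; [apply functional_extensionality; intro; ring|].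
    change (x < y) in Hxy. lra.
  - change (smallS (level (S n))
      (mul (level (S (S n))) (emb (S n) x) (inv (level (S (S n))) (emb (S n) y)))).
    rewrite <- emb_inv, <- emb_mul. now apply smallS_emb.
Qed.

Lemma subgrid_subset P (S T : car P -> Prop) :
  subgrid P S -> (forall y, T y -> S y) -> subgrid P T.
Proof. intros (mu & lo & Hmu & Hlo & HS) TS. exists mu, lo. auto. Qed.

Lemma subgrid_empty P : subgrid P (fun _ => False).
Proof. exists nil, nil. repeat split; [constructor | now intros y]. Qed.

Section SubgridUnion.

Variable P : lvl.
Hypothesis mul1l : forall x, mul P (one P) x = x.

Lemma monpow_app_zeros_r mu1 mu2 k :
  length k = length mu1 ->
  monpow P (mu1 ++ mu2) (k ++ repeat 0%Z (length mu2)) = monpow P mu1 k.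
Proof.
  revert k; induction mu1 as [|u mu1 IH]; intros [|j k] Hk; try discriminate.
  - induction mu2 as [|v mu2 IH2]; [reflexivity|].
    cbn [app length repeat] in *. now rewrite monpow_cons, mul1l.
  - cbn [app]. rewrite !monpow_cons. f_equal. apply IH. simpl in Hk. lia.
Qed.

Lemma monpow_app_zeros_l mu1 mu2 k :
  monpow P (mu1 ++ mu2) (repeat 0%Z (length mu1) ++ k) = monpow P mu2 k.
Proof.
  induction mu1 as [|u mu1 IH]; [reflexivity|].
  cbn [app length repeat]. now rewrite monpow_cons, mul1l.
Qed.

Let lower_min (lo : list Z) := map (Z.min 0) lo.

Lemma Forall2_lower_min lo k : Forall2 Z.le lo k -> Forall2 Z.le (lower_min lo) k.
Proof. induction 1; constructor; auto; lia. Qed.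

Lemma Forall2_lower_min_zeros lo :
  Forall2 Z.le (lower_min lo) (repeat 0%Z (length lo)).
Proof. induction lo; constructor; auto; lia. Qed.

(* Two grids sit inside the grid of the concatenated ratio sets; lowering
   the bounds to at most 0 lets the unused exponents be 0. *)
Lemma subgrid_union (S1 S2 : car P -> Prop) :
  subgrid P S1 -> subgrid P S2 -> subgrid P (fun y => S1 y \/ S2 y).
Proof.
  intros (mu1 & lo1 & R1 & L1 & G1) (mu2 & lo2 & R2 & L2 & G2).
  exists (mu1 ++ mu2), (lower_min lo1 ++ lower_min lo2).
  split; [now apply Forall_app|].
  split; [unfold lower_min; rewrite !length_app, !length_map; lia|].
  intros y [Hy|Hy].
  - destruct (G1 y Hy) as (k & Hk & Hlo & ->).
    exists (k ++ repeat 0%Z (length mu2)).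
    rewrite monpow_app_zeros_r by exact Hk. repeat split.
    + rewrite !length_app, repeat_length. lia.
    + apply Forall2_app; [now apply Forall2_lower_min|].
      rewrite <- L2. apply Forall2_lower_min_zeros.
  - destruct (G2 y Hy) as (k & Hk & Hlo & ->).
    exists (repeat 0%Z (length mu1) ++ k).
    rewrite monpow_app_zeros_l. repeat split.
    + rewrite !length_app, repeat_length. lia.
    + apply Forall2_app; [|now apply Forall2_lower_min].
      rewrite <- L1. apply Forall2_lower_min_zeros.
Qed.

Lemma subgrid_bigunion {U : Type} (F : U -> car P -> Prop) (l : list U) :
  (forall u, In u l -> subgrid P (F u)) ->
  subgrid P (fun m => exists u, In u l /\ F u m).
Proof.
  induction l as [|a l IH]; intros HF.
  - eapply subgrid_subset; [apply subgrid_empty|]. now intros y (u & [] & _).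
  - eapply subgrid_subset.
    + apply subgrid_union; [apply HF; now left | apply IH; intros; apply HF; now right].
    + intros y (u & [<-|Hu] & Hy); [now left | right; now exists u].
Qed.

End SubgridUnion.

Lemma subgrid_emb n (X : car (level n) -> Prop) :
  (forall x, valid (level n) x -> valid (level (S n)) (emb n x)) ->
  subgrid (level n) X -> subgrid (level (S n)) (fun z => exists y, X y /\ z = emb n y).
Proof.
  intros emb_valid_n (mu & lo & Hmu & Hlo & HX). exists (map (emb n) mu), lo.
  split; [|split; [now rewrite length_map|]].
  - apply Forall_map. eapply Forall_impl; [|exact Hmu].
    intros u [Hu u_small]. split; [now apply emb_valid_n|].
    rewrite <- emb_one. now apply emb_lt.
  - intros z (y & Hy & ->). destruct (HX y Hy) as (k & Hk & Hk_lo & ->).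
    exists k. rewrite length_map, emb_monpow. auto.
Qed.

Lemma emb_valid n x : valid (level n) x -> valid (level (S n)) (emb n x).
Proof.
  revert x; induction n as [|n IH]; intros x Hx.
  - split; [eapply subgrid_subset; [apply subgrid_empty|]|]; now intros m Hm.
  - destruct x as [a f], Hx as [Hsupp Hlarge]. split.
    + eapply subgrid_subset; [exact (subgrid_emb n _ IH Hsupp)|].
      intros y Hy. destruct (push_neq0 _ _ _ Hy) as (x & <- & Hx). now exists x.
    + intros m Hm. destruct (push_neq0 _ _ _ Hm) as (x & <- & Hx).
      destruct (Hlarge x Hx) as [Hv Hlt]. split; [now apply IH|].
      rewrite <- emb_one. now apply emb_lt.
Qed.

Lemma supp_zpow P (u : car (succ_lvl P)) j m :
  snd u m = 0 -> snd (zpow (succ_lvl P) u j) m = 0.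
Proof.
  intros um. destruct j as [|p|p]; simpl; [reflexivity| |];
    induction (Pos.to_nat p) as [|i IH]; simpl; [reflexivity| |reflexivity|];
    rewrite IH, ?um; ring.
Qed.

Lemma supp_monpow P (mu : list (car (succ_lvl P))) k m :
  snd (monpow (succ_lvl P) mu k) m <> 0 -> exists u, In u mu /\ snd u m <> 0.
Proof.
  revert k; induction mu as [|u mu IH]; intros [|j k] Hm; try (now contradict Hm).
  change (snd (zpow (succ_lvl P) u j) m + snd (monpow (succ_lvl P) mu k) m <> 0) in Hm.
  destruct (Req_dec (snd u m) 0) as [um|um]; [|exists u; split; [now left | exact um]].
  rewrite supp_zpow in Hm by exact um.
  destruct (IH k) as (v & Hv & vm); [lra|]. exists v. split; [now right | exact vm].
Qed.

Lemma logfree_subgrid_supports n (A : car (level (S n)) -> Prop) :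
  logfree_subgrid (S n) A ->
  logfree_subgrid n (fun m => exists x, A x /\ snd x m <> 0).
Proof.
  intros [A_valid (mu & lo & Hmu & Hlo & HA)]. split.
  - intros m (x & Hx & xm). exact (proj1 (proj2 (A_valid x Hx) m xm)).
  - eapply subgrid_subset.
    + apply (subgrid_bigunion (level n) (level_mul1l n) (fun u m => snd u m <> 0) mu).
      intros u Hu. unfold ratio_set in Hmu. rewrite Forall_forall in Hmu. exact (proj1 (proj1 (Hmu u Hu))).
    + intros m (x & Hx & xm). destruct (HA x Hx) as (k & _ & _ & ->).
      now apply supp_monpow in xm.
Qed.

Lemma inG_valid n k y : inG n k y -> valid (level n) y.
Proof. destruct n; simpl; tauto. Qed.

Lemma inG_mono n j k y : inG n j y -> (j <= k)%nat -> inG n k y.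
Proof.
  revert y; induction n as [|n IH]; simpl; intros y Hy Hjk; [exact Hy|].
  destruct Hy as [Hv Hy]. split; [exact Hv|]. intros Hk.
  destruct (Hy ltac:(lia)) as (m0 & E & Hm0). exists m0. split; [exact E|].
  eapply IH; eassumption.
Qed.

Lemma inG_emb n k y : inG n k y -> inG (S n) k (emb n y).
Proof.
  intros Hy. split; [apply emb_valid; eapply inG_valid; eassumption|].
  intros _. now exists y.
Qed.

Lemma inG_level N m : valid (level N) m -> inG N N m.
Proof. destruct N; simpl; [auto|]. intros Hm. split; [exact Hm | lia]. Qed.

Lemma inG_supp n k (x : car (level (S n))) m :
  inG (S n) k x -> snd x m <> 0 -> inG n (pred k) m.
Proof.
  revert k x m; induction n as [|n IH]; intros k x m Hx xm; [exact I|].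
  destruct Hx as [[_ Hlarge] Hx]. split; [exact (proj1 (Hlarge m xm))|].
  intros Hk. destruct (Hx ltac:(lia)) as (x0 & <- & Hx0).
  destruct (push_neq0 (emb n) (snd x0) m xm) as (m0 & <- & Hm0).
  exists m0. split; [reflexivity|]. eapply IH; eassumption.
Qed.

Lemma height_exists N (A : car (level N) -> Prop) :
  logfree_subgrid N A -> exists h, is_height N A h.
Proof.
  intros [A_valid _].
  destruct (dec_inh_nat_subset_has_unique_least_element
              (fun k => forall m, A m -> inG N k m)) as (h & [Hh Hmin] & _).
  - intros k. apply classic.
  - exists N. intros m Hm. now apply inG_level, A_valid.
  - now exists h.
Qed.

Lemma hereditary_closure n (A : car (level n) -> Prop) :
  logfree_subgrid n A ->
  exists B, logfree_subgrid n B /\ hereditary n B /\ (forall m, A m -> B m) /\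
    (forall k, (forall m, A m -> inG n k m) -> forall m, B m -> inG n k m).
Proof.
  revert A; induction n as [|n IH]; intros A HA.
  { exists A. repeat split; auto; apply HA. }
  set (Supp := fun m => exists x, A x /\ snd x m <> 0).
  destruct (IH Supp (logfree_subgrid_supports n A HA))
    as (D & [D_valid D_subgrid] & D_hered & Supp_D & D_height).
  exists (fun z => A z \/ exists y, D y /\ z = emb n y).
  destruct HA as [A_valid A_subgrid].
  split; [split|split; [|split]].
  - intros z [Hz | (y & Hy & ->)]; [now apply A_valid | now apply emb_valid, D_valid].
  - apply (subgrid_union _ (level_mul1l (S n))); [exact A_subgrid|].
    apply subgrid_emb; [apply emb_valid | exact D_subgrid].
  - intros x [Hx | (y & Hy & ->)] m xm; right.
    + exists m. split; [apply Supp_D; now exists x | reflexivity].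
    + destruct n as [|n]; [now contradict xm|].
      destruct (push_neq0 (emb n) (snd y) m xm) as (m0 & <- & ym0).
      exists (emb n m0). split; [exact (D_hered y Hy m0 ym0) | reflexivity].
  - now left.
  - intros k Hk m [Hm | (y & Hy & ->)]; [now apply Hk|].
    apply inG_emb, (inG_mono _ (pred k)); [|lia].
    apply D_height; [|exact Hy]. intros m0 (x & Hx & xm0). eapply inG_supp; eauto.
Qed.

Theorem proposition2p21 (N : nat) (A : car (level N) -> Prop) :
  logfree_subgrid N A ->
  exists (d : nat) (B : car (level (d + N)) -> Prop) (h : nat),
    logfree_subgrid (d + N) B /\
    hereditary (d + N) B /\
    (forall m, A m -> B (emb_up N d m)) /\
    is_height N A h /\ is_height (d + N) B h.
Proof.
  intros HA.
  destruct (hereditary_closure N A HA) as (B & HB & B_hered & AB & B_height).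
  destruct (height_exists N A HA) as [h [A_in_h A_min]].
  exists 0%nat, B, h.
  split; [exact HB|]. split; [exact B_hered|]. split; [exact AB|].
  split; [now split|]. split; [now apply B_height|].
  intros k Hk. apply A_min. intros m Hm. now apply Hk, AB.
Qed.
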